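(* Let $C_{1/3}$ be the middle-third Cantor set and $C(1/3)=C_{1/3}\times C_{1/3}$. For every $\mathbf{t}\in C(1/3)$, the pinned distance set $\Delta_{\mathbf{t}}(C(1/3))=\{\|\mathbf{c}-\mathbf{t}\|_2:\mathbf{c}\in C(1/3)\}$ has non-empty interior.
   Context: $C_{1/3}=\{\tfrac23\sum_{k\ge1}a_k3^{-(k-1)}:a_k\in\{0,1\}\}$; $\|\cdot\|_2$ is the Euclidean norm on $\mathbb{R}^2$. *)

From Stdlib Require Import Reals.
Open Scope R_scope.

(* Middle-third Cantor set:
   C_{1/3} = { (2/3) * sum_{k>=1} a_k 3^{-(k-1)} : a_k in {0,1} }.
   Indexing from 0: x = (2/3) * sum_{n>=0} a_n (1/3)^n. *)
Definition cantor_third (x : R) : Prop :=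
  exists a : nat -> bool,
    infinite_sum (fun n => (if a n then 1 else 0) * (/ 3) ^ n) ((3 / 2) * x).

Definition cantor_square (p : R * R) : Prop :=
  cantor_third (fst p) /\ cantor_third (snd p).

Definition dist2 (c t : R * R) : R :=
  sqrt ((fst c - fst t) ^ 2 + (snd c - snd t) ^ 2).

Definition pinned_distance_set (E : R * R -> Prop) (t : R * R) (r : R) : Prop :=
  exists c, E c /\ r = dist2 c t.

Definition nonempty_interior (S : R -> Prop) : Prop :=
  exists a b : R, a < b /\ forall r, a < r < b -> S r.

From Stdlib Require Import Reals Lra Lia Psatz.
Open Scope R_scope.

(* Reflecting a coordinate (x |-> 1 - x preserves C_{1/3}) and swapping the
   coordinates, we may assume 0 <= t1 <= t2 <= 1/3.  Then the level-3 square
   Q = [8/9, 8/9 + 1/27] x [2/3, 2/3 + 1/27] of C(1/3) is seen from t inside a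
   cone in which, for every subsquare, the ranges of squared distances to t
   over its four children overlap in a chain and so cover the range of the
   subsquare.  Given s between the squared distances from t to the lower-left
   and upper-right corners of Q, we can therefore descend through nested
   squares whose ranges all contain s; they shrink to a point c of C(1/3)
   with |c - t|^2 = s. *)

Definition digit_term (a : nat -> bool) (n : nat) : R :=
  (if a n then 1 else 0) * (/ 3) ^ n.

Fixpoint digit_sum (a : nat -> bool) (n : nat) : R :=
  match n with
  | O => 0
  | S k => digit_sum a k + digit_term a k
  end.

Definition digit_compl (a : nat -> bool) (n : nat) : bool := negb (a n).

Lemma digit_sum_S a n : digit_sum a (S n) = sum_f_R0 (digit_term a) n.
Proof. induction n as [|n IH]; simpl in *; [ring | rewrite <- IH; ring]. Qed.

Lemma pow_inv3_pos n : 0 < (/ 3) ^ n.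
Proof. apply pow_lt; lra. Qed.

Lemma pow_inv3_le1 n : (/ 3) ^ n <= 1.
Proof. induction n as [|n IH]; simpl; [lra |]. pose proof (pow_inv3_pos n). lra. Qed.

Lemma digit_term_bounds a n : 0 <= digit_term a n <= (/ 3) ^ n.
Proof. unfold digit_term. pose proof (pow_inv3_pos n). destruct (a n); lra. Qed.

Lemma infinite_sum_ext f g l :
  (forall n, f n = g n) -> infinite_sum f l -> infinite_sum g l.
Proof.
  intro Hfg. apply (Un_cv_ext (sum_f_R0 f) (sum_f_R0 g)).
  intro n. apply sum_eq. auto.
Qed.

Lemma infinite_sum_pow_inv3 : infinite_sum (fun n => (/ 3) ^ n) (3 / 2).
Proof.
  apply (infinite_sum_ext (fun n => 1 * (/ 3) ^ n)); [intro; ring |].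
  replace (3 / 2) with (/ (1 - / 3)) by field.
  apply GP_infinite. rewrite Rabs_right; lra.
Qed.

Lemma digit_series_exists a : exists S, infinite_sum (digit_term a) S.
Proof.
  destruct (Rseries_CV_comp (digit_term a) (fun n => (/ 3) ^ n)) as [S HS].
  - apply digit_term_bounds.
  - exists (3 / 2). exact infinite_sum_pow_inv3.
  - exists S. exact HS.
Qed.

Lemma digit_sum_le_series a S n :
  infinite_sum (digit_term a) S -> digit_sum a n <= S.
Proof.
  intro HS.
  assert (Hpartial : forall k, sum_f_R0 (digit_term a) k <= S).
  { intro k. apply sum_incr; [exact HS | apply digit_term_bounds]. }
  destruct n as [|n].
  - specialize (Hpartial O). pose proof (digit_term_bounds a 0). simpl in *. lra.
  - rewrite digit_sum_S. apply Hpartial.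
Qed.

Lemma digit_term_compl a n : digit_term a n + digit_term (digit_compl a) n = (/ 3) ^ n.
Proof. unfold digit_term, digit_compl. destruct (a n); simpl; ring. Qed.

Lemma digit_series_compl a S :
  infinite_sum (digit_term a) S -> infinite_sum (digit_term (digit_compl a)) (3 / 2 - S).
Proof.
  intro HS.
  apply (Un_cv_ext (fun N => sum_f_R0 (fun n => (/ 3) ^ n) N - sum_f_R0 (digit_term a) N)).
  - intro N. rewrite <- minus_sum. apply sum_eq. intros i _.
    rewrite <- (digit_term_compl a i). ring.
  - exact (CV_minus _ _ _ _ infinite_sum_pow_inv3 HS).
Qed.

Lemma digit_sum_compl a n :
  digit_sum a n + digit_sum (digit_compl a) n = 3 / 2 * (1 - (/ 3) ^ n).
Proof.
  induction n as [|n IH]; simpl; [ring |].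
  pose proof (digit_term_compl a n). lra.
Qed.

Lemma digit_series_bounds a S n : infinite_sum (digit_term a) S ->
  digit_sum a n <= S <= digit_sum a n + 3 / 2 * (/ 3) ^ n.
Proof.
  intro HS. split; [now apply digit_sum_le_series |].
  pose proof (digit_sum_le_series _ _ n (digit_series_compl a S HS)).
  pose proof (digit_sum_compl a n). lra.
Qed.

Lemma cantor_third_of_digits a : exists x, cantor_third x /\
  forall n, 2 / 3 * digit_sum a n <= x <= 2 / 3 * digit_sum a n + (/ 3) ^ n.
Proof.
  destruct (digit_series_exists a) as [S HS].
  exists (2 / 3 * S). split.
  - exists a. replace (3 / 2 * (2 / 3 * S)) with S by field. exact HS.
  - intro n. pose proof (digit_series_bounds a S n HS). lra.
Qed.

Definition mirror (b : bool) (x : R) : R := if b then 1 - x else x.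

Lemma mirror_sub_sqr b x y : (mirror b x - y) ^ 2 = (x - mirror b y) ^ 2.
Proof. destruct b; simpl; ring. Qed.

Lemma cantor_third_mirror b x : cantor_third x -> cantor_third (mirror b x).
Proof.
  destruct b; simpl; [| trivial].
  intros [a Ha]. exists (digit_compl a).
  replace (3 / 2 * (1 - x)) with (3 / 2 - 3 / 2 * x) by ring.
  now apply digit_series_compl.
Qed.

Lemma cantor_third_mirror_left_third x :
  cantor_third x -> exists b, 0 <= mirror b x <= 1 / 3.
Proof.
  intros [a Ha]. pose proof (digit_series_bounds a _ 1 Ha) as Hx.
  simpl in Hx. unfold digit_term in Hx.
  destruct (a O); [exists true | exists false]; simpl; lra.
Qed.

Lemma eq0_of_Rabs_le_pow d C q :
  Rabs q < 1 -> (forall n, Rabs d <= C * q ^ n) -> d = 0.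
Proof.
  intros Hq Hd. destruct (Req_dec d 0) as [| Hne]; [assumption | exfalso].
  pose proof (Rabs_pos_lt d Hne) as Hpos.
  assert (HC : 0 < C) by (specialize (Hd O); simpl in Hd; lra).
  destruct (pow_lt_1_zero q Hq (Rabs d / C)) as [N HN];
    [apply Rdiv_lt_0_compat; assumption |].
  specialize (HN N (le_n N)). specialize (Hd N).
  assert (C * q ^ N <= C * Rabs (q ^ N)) by (apply Rmult_le_compat_l; [lra | apply Rle_abs]).
  apply (Rmult_lt_compat_l C) in HN; [| assumption].
  replace (C * (Rabs d / C)) with (Rabs d) in HN by (field; lra).
  lra.
Qed.

Definition sqdist (c t : R * R) : R := (fst c - fst t) ^ 2 + (snd c - snd t) ^ 2.

Lemma nonempty_interior_pinned_transfer (E : R * R -> Prop) (g : R * R -> R * R) t t' :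
  (forall c, E c -> E (g c) /\ dist2 (g c) t = dist2 c t') ->
  nonempty_interior (pinned_distance_set E t') ->
  nonempty_interior (pinned_distance_set E t).
Proof.
  intros Hg [a [b [Hab Hint]]]. exists a, b. split; [exact Hab |].
  intros r Hr. destruct (Hint r Hr) as [c [Ec ->]].
  destruct (Hg c Ec) as [Egc Hdist]. exists (g c). split; [exact Egc | now rewrite Hdist].
Qed.

Lemma nonempty_interior_pinned_of_sqdist_interval (E : R * R -> Prop) t lo hi :
  0 <= lo < hi -> (forall s, lo <= s <= hi -> exists c, E c /\ sqdist c t = s) ->
  nonempty_interior (pinned_distance_set E t).
Proof.
  intros Hlh Honto. exists (sqrt lo), (sqrt hi). split; [apply sqrt_lt_1; lra |].
  intros r [Hlo Hhi].
  pose proof (sqrt_pos lo).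
  pose proof (sqrt_sqrt lo ltac:(lra)). pose proof (sqrt_sqrt hi ltac:(lra)).
  destruct (Honto (r ^ 2)) as [c [Ec Hc]]; [split; nra |].
  exists c. split; [exact Ec |].
  change (r = sqrt (sqdist c t)). rewrite Hc, sqrt_pow2; lra.
Qed.

Definition upper_corner (c : R * R) (l : R) : R * R := (fst c + l, snd c + l).

Definition in_square (p c : R * R) (l : R) : Prop :=
  fst c <= fst p <= fst c + l /\ snd c <= snd p <= snd c + l.

Definition square_incl (c : R * R) (l : R) (c0 : R * R) (l0 : R) : Prop :=
  fst c0 <= fst c /\ fst c + l <= fst c0 + l0 /\ snd c0 <= snd c /\ snd c + l <= snd c0 + l0.

Definition straddles (t : R * R) (s : R) (c : R * R) (l : R) : Prop :=
  sqdist c t <= s <= sqdist (upper_corner c l) t.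

Lemma sqdist_upper_corner_sub t c l :
  sqdist (upper_corner c l) t - sqdist c t = 2 * l * (fst c - fst t + (snd c - snd t) + l).
Proof. unfold sqdist, upper_corner. simpl. ring. Qed.

Lemma sqdist_in_square t c l p : fst t <= fst c -> snd t <= snd c -> in_square p c l ->
  sqdist c t <= sqdist p t <= sqdist (upper_corner c l) t.
Proof. unfold in_square, sqdist, upper_corner. simpl. intros. split; nra. Qed.

Lemma sqdist_lt_upper_corner t c l : fst t <= fst c -> snd t <= snd c -> 0 < l ->
  sqdist c t < sqdist (upper_corner c l) t.
Proof. intros. pose proof (sqdist_upper_corner_sub t c l). nra. Qed.

Definition child_offset (b : bool) (l : R) : R := if b then 2 * l / 3 else 0.

Definition child_corner (c : R * R) (l : R) (d : bool * bool) : R * R :=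
  (fst c + child_offset (fst d) l, snd c + child_offset (snd d) l).

Definition child_top (t c : R * R) (l : R) (d : bool * bool) : R :=
  sqdist (upper_corner (child_corner c l d) (l / 3)) t.

Definition child_digits (t : R * R) (s : R) (c : R * R) (l : R) : bool * bool :=
  if Rle_dec s (child_top t c l (false, false)) then (false, false)
  else if Rle_dec s (child_top t c l (false, true)) then (false, true)
  else if Rle_dec s (child_top t c l (true, false)) then (true, false)
  else (true, true).

Lemma child_square_incl c l d : 0 <= l -> square_incl (child_corner c l d) (l / 3) c l.
Proof.
  intro Hl. unfold square_incl, child_corner, child_offset.
  destruct d as [[|] [|]]; simpl; lra.
Qed.

(* Ordered 00, 01, 10, 11, each child's range of squared distances to [t]
   begins before the previous one's ends.  This needs [c - t] to lie, with
   margin [l / 2], in the cone between the lines of slopes 1/3 and 1. *)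
Lemma child_squares_overlap t c l : 0 <= l ->
  snd c - snd t + l / 2 <= fst c - fst t ->
  fst c - fst t + l / 2 <= 3 * (snd c - snd t) ->
  sqdist (child_corner c l (false, true)) t <= child_top t c l (false, false) /\
  sqdist (child_corner c l (true, false)) t <= child_top t c l (false, true) /\
  sqdist (child_corner c l (true, true)) t <= child_top t c l (true, false).
Proof.
  intros Hl Hw1 Hw2.
  unfold child_top, sqdist, upper_corner, child_corner, child_offset. simpl.
  split; [| split]; nra.
Qed.

Lemma straddles_child t s c l : 0 < l ->
  snd c - snd t + l / 2 <= fst c - fst t ->
  fst c - fst t + l / 2 <= 3 * (snd c - snd t) ->
  straddles t s c l -> straddles t s (child_corner c l (child_digits t s c l)) (l / 3).
Proof.
  intros Hl Hw1 Hw2 [Hlo Hhi].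
  destruct (child_squares_overlap t c l ltac:(lra) Hw1 Hw2) as (H01 & H10 & H11).
  assert (Hfirst : sqdist (child_corner c l (false, false)) t = sqdist c t).
  { unfold child_corner, child_offset. simpl. now rewrite !Rplus_0_r, <- surjective_pairing. }
  assert (Hlast : child_top t c l (true, true) = sqdist (upper_corner c l) t).
  { unfold child_top, child_corner, child_offset, upper_corner. simpl.
    f_equal; f_equal; field. }
  unfold straddles, child_digits.
  destruct (Rle_dec s (child_top t c l (false, false)));
  [| destruct (Rle_dec s (child_top t c l (false, true)));
  [| destruct (Rle_dec s (child_top t c l (true, false)))]];
  unfold child_top in *; lra.
Qed.

Section NestedSquares.

Variable pick : nat -> R * R -> bool * bool.

Fixpoint nested_corner (n : nat) : R * R :=
  match n with
  | O => (0, 0)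
  | S k => child_corner (nested_corner k) ((/ 3) ^ k) (pick k (nested_corner k))
  end.

Definition nested_digit_x (n : nat) : bool := fst (pick n (nested_corner n)).
Definition nested_digit_y (n : nat) : bool := snd (pick n (nested_corner n)).

Lemma nested_corner_digit_sum n :
  nested_corner n = (2 / 3 * digit_sum nested_digit_x n, 2 / 3 * digit_sum nested_digit_y n).
Proof.
  induction n as [|n IH]; simpl; [f_equal; ring |].
  unfold child_corner, digit_term, nested_digit_x at 2, nested_digit_y at 2.
  destruct (pick n (nested_corner n)) as [dx dy]. rewrite IH. simpl.
  unfold child_offset. destruct dx, dy; f_equal; field.
Qed.

Lemma nested_corner_limit :
  exists p, cantor_square p /\ forall n, in_square p (nested_corner n) ((/ 3) ^ n).
Proof.
  destruct (cantor_third_of_digits nested_digit_x) as [x [Hx Bx]].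
  destruct (cantor_third_of_digits nested_digit_y) as [y [Hy By]].
  exists (x, y). split; [split; assumption |].
  intro n. rewrite nested_corner_digit_sum. split; [apply Bx | apply By].
Qed.

End NestedSquares.

Section GreedyDescent.

Variables (t : R * R) (s : R) (m : nat) (prefix : nat -> bool * bool).

Definition greedy_pick (k : nat) (c : R * R) : bool * bool :=
  if Nat.ltb k m then prefix k else child_digits t s c ((/ 3) ^ k).

Local Notation corner := (nested_corner greedy_pick).
Local Notation base := (corner m).
Local Notation L := ((/ 3) ^ m).

(* The cone condition of [child_squares_overlap] for every square inside the
   base square. *)
Hypothesis cone_low : snd base + L - snd t + L / 2 <= fst base - fst t.
Hypothesis cone_high : fst base + L - fst t + L / 2 <= 3 * (snd base - snd t).
Hypothesis base_straddles : straddles t s base L.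

Lemma greedy_invariant j :
  square_incl (corner (m + j)) ((/ 3) ^ (m + j)) base L /\
  straddles t s (corner (m + j)) ((/ 3) ^ (m + j)).
Proof.
  induction j as [|j [Hincl Hstr]].
  - rewrite Nat.add_0_r. split; [unfold square_incl; lra | exact base_straddles].
  - rewrite Nat.add_succ_r. simpl nested_corner.
    set (c := corner (m + j)) in *. set (l := (/ 3) ^ (m + j)) in *.
    assert (Hpick : greedy_pick (m + j) c = child_digits t s c l).
    { unfold greedy_pick. replace (Nat.ltb (m + j) m) with false; [reflexivity |].
      symmetry. apply Nat.ltb_ge. lia. }
    assert (Hl : 0 < l) by apply pow_inv3_pos.
    assert (HlL : l <= L).
    { unfold l. rewrite pow_add. pose proof (pow_inv3_le1 j). pose proof (pow_inv3_pos m). nra. }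
    replace ((/ 3) ^ S (m + j)) with (l / 3) by (unfold l; simpl; field).
    rewrite Hpick.
    pose proof (child_square_incl c l (child_digits t s c l) ltac:(lra)) as Hchild.
    unfold square_incl in *. split; [lra |].
    apply straddles_child; [assumption | lra | lra | assumption].
Qed.

Lemma greedy_point : exists p, cantor_square p /\ sqdist p t = s.
Proof.
  destruct (nested_corner_limit greedy_pick) as [p [Hp Hin]].
  exists p. split; [exact Hp |].
  set (K := 2 * (fst base + L - fst t + (snd base + L - snd t) + L)).
  apply Rminus_diag_uniq, (eq0_of_Rabs_le_pow _ (L * K) (/ 3));
    [rewrite Rabs_right; lra |].
  intro j. destruct (greedy_invariant j) as [Hincl Hstr].
  specialize (Hin (m + j)%nat).
  set (c := corner (m + j)%nat) in *. set (l := (/ 3) ^ (m + j)) in *.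
  assert (Hl : 0 < l) by apply pow_inv3_pos.
  replace (L * K * (/ 3) ^ j) with (l * K) by (unfold l; rewrite pow_add; ring).
  unfold square_incl, straddles in *.
  pose proof (sqdist_in_square t c l p ltac:(lra) ltac:(lra) Hin).
  pose proof (sqdist_upper_corner_sub t c l).
  assert (2 * (fst c - fst t + (snd c - snd t) + l) <= K) by (unfold K; lra).
  apply Rabs_le. nra.
Qed.

End GreedyDescent.

Lemma nonempty_interior_pinned_ordered t :
  0 <= fst t <= snd t -> snd t <= 1 / 3 ->
  nonempty_interior (pinned_distance_set cantor_square t).
Proof.
  intros Ht1 Ht2.
  (* digits 110 in the first coordinate and 100 in the second *)
  set (prefix := fun k => (Nat.leb k 1, Nat.eqb k 0)).
  set (Q := (8 / 9, 2 / 3)).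
  assert (Hbase : forall s, nested_corner (greedy_pick t s 3 prefix) 3 = Q).
  { intro s. unfold Q, greedy_pick, prefix. simpl.
    unfold child_corner, child_offset. simpl. f_equal; field. }
  apply (nonempty_interior_pinned_of_sqdist_interval _ t
           (sqdist Q t) (sqdist (upper_corner Q ((/ 3) ^ 3)) t)).
  - split; [unfold sqdist; apply Rplus_le_le_0_compat; apply pow2_ge_0 |].
    apply sqdist_lt_upper_corner; [simpl; lra | simpl; lra | apply pow_inv3_pos].
  - intros s Hs. apply (greedy_point t s 3 prefix); rewrite Hbase;
      [simpl; lra | simpl; lra | exact Hs].
Qed.

Lemma nonempty_interior_pinned_left_third t :
  0 <= fst t <= 1 / 3 -> 0 <= snd t <= 1 / 3 ->
  nonempty_interior (pinned_distance_set cantor_square t).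
Proof.
  intros Ht1 Ht2. destruct (Rle_dec (fst t) (snd t)).
  - apply nonempty_interior_pinned_ordered; lra.
  - apply (nonempty_interior_pinned_transfer _ (fun c => (snd c, fst c)) _ (snd t, fst t)).
    + intros c [Hc1 Hc2]. split; [split; assumption |].
      unfold dist2. simpl. f_equal. ring.
    + apply nonempty_interior_pinned_ordered; simpl; lra.
Qed.

Theorem mainTheorem6 :
  forall t : R * R, cantor_square t ->
    nonempty_interior (pinned_distance_set cantor_square t).
Proof.
  intros [t1 t2] [Ht1 Ht2].
  destruct (cantor_third_mirror_left_third t1 Ht1) as [b1 Hb1].
  destruct (cantor_third_mirror_left_third t2 Ht2) as [b2 Hb2].
  apply (nonempty_interior_pinned_transfer _
           (fun c => (mirror b1 (fst c), mirror b2 (snd c))) _ (mirror b1 t1, mirror b2 t2)).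
  - intros c [Hc1 Hc2]. split; [split; now apply cantor_third_mirror |].
    unfold dist2. cbn [fst snd]. now rewrite !mirror_sub_sqr.
  - now apply nonempty_interior_pinned_left_third.
Qed.
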